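(* Let $\kappa\in K_2(\mathbb{Q}(T))$. Then there exist a finite set $\Sigma$ of rational points of $S^1$ and a locally constant function $n=n_\kappa\colon S^1\setminus\Sigma\to\mathbb{Z}$ such that for every primitive $\lambda\in X$ with $\mathbb{R}_+\lambda\notin\Sigma$, the residue (tame symbol) of $\kappa$ along the boundary divisor $D_\lambda\cong\mathbb{G}_m$ equals $c\,z^{n(\mathbb{R}_+\lambda)}$ for some constant $c\in\mathbb{Q}^\times$.
   Context: $T=\mathbb{G}_m^2=\operatorname{Spec}\mathbb{Q}[X^*]$ over $\mathbb{Q}$, with cocharacter lattice $X\cong\mathbb{Z}^2$, character lattice $X^*$, and pairing $\langle\,,\rangle\colon X\times X^*\to\mathbb{Z}$. Fix an orientation of $X_{\mathbb{R}}=X\otimes\mathbb{R}$, giving $\wedge\colon X\times X\to\mathbb{Z}$ with $\bigwedge^2X\cong\mathbb{Z}$. $S^1=(X_{\mathbb{R}}\setminus\{0\})/\mathbb{R}_+$ is the circle of rays; a ray is rational if it contains a nonzero point of $X$. For primitive $\lambda\in X$ let $V_\lambda=\{\chi\in X^*:\langle\lambda,\chi\rangle\le0\}$ and $T_\lambda=\operatorname{Spec}\mathbb{Q}[V_\lambda]$, a partial toric compactification of $T$; $D_\lambda=T_\lambda\setminus T$ is an irreducible divisor, $T$-equivariantly isomorphic to $T/\lambda(\mathbb{G}_m)$, and a character $\chi$ vanishes along $D_\lambda$ to order $-\langle\lambda,\chi\rangle$. $D_\lambda$ is identified with $\mathbb{G}_m$ (coordinate $z$) via $\mathbb{G}_m\xrightarrow{\mu}T\to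 T/\lambda(\mathbb{G}_m)$ for any $\mu\in X$ with $\mu\wedge\lambda=1$. The residue along $D_\lambda$ is the tame symbol $\{f,g\}\mapsto(-1)^{v(f)v(g)}g^{v(f)}f^{-v(g)}$ for the valuation $v$ of $D_\lambda$ on $\mathbb{Q}(T)$. *)

From HB Require Import structures.
From mathcomp Require Import all_boot all_order all_algebra.
From mathcomp Require Import fraction.
From mathcomp Require Import Rstruct.
From Stdlib Require Import Rdefinitions.
Set Implicit Arguments. Unset Strict Implicit. Unset Printing Implicit Defensive.
Import Order.TTheory GRing.Theory Num.Theory.
Local Open Scope ring_scope.

(* Cocharacters X = Z^2 and characters X^* = Z^2. *)
Definition cochar := (int * int)%type.
Definition charac := (int * int)%type.

Definition pairing (l : cochar) (c : charac) : int := l.1 * c.1 + l.2 * c.2.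
Definition wedge (m l : cochar) : int := m.1 * l.2 - m.2 * l.1.
Definition primitive (l : cochar) : bool := gcdz l.1 l.2 == 1.

(* Laurent polynomials in Q[X^*]: sum over chi in (undup supp) of coef chi * chi *)
Record lpoly := LPoly { lp_supp : seq charac ; lp_coef : charac -> rat }.
Definition lp_support (p : lpoly) : seq charac :=
  [seq c <- undup (lp_supp p) | lp_coef p c != 0].
Definition lp_nonzero (p : lpoly) : bool := lp_support p != [::].

(* order of vanishing along D_lambda: a character chi vanishes to order
   -<lambda,chi>; for a Laurent polynomial it is the minimum over its support *)
Definition ordv (l : cochar) (p : lpoly) : int :=
  match lp_support p with
  | [::] => 0
  | c :: s => foldr (fun c' m => Num.min (- pairing l c') m) (- pairing l c) s
  end.

(* the field Q(z) of rational functions on D_lambda = G_m, and z *)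
Definition Qz := {fraction {poly rat}}.
Definition zF : Qz := tofrac ('X : {poly rat}).

(* initial form of p along D_lambda, pulled back along mu : G_m -> T
   (chi |-> z^<mu,chi>) *)
Definition inres (l m : cochar) (p : lpoly) : Qz :=
  \sum_(c <- lp_support p | - pairing l c == ordv l p)
     tofrac ((lp_coef p c)%:P) * zF ^ (pairing m c).

(* a nonzero rational function f = p/q in Q(T) is given by a pair (p, q) *)
Definition ratfun := (lpoly * lpoly)%type.
Definition rf_nonzero (f : ratfun) : bool := lp_nonzero f.1 && lp_nonzero f.2.
Definition vF (l : cochar) (f : ratfun) : int := ordv l f.1 - ordv l f.2.
(* restriction to D_lambda (identified with G_m via mu) of the leading term *)
Definition resF (l m : cochar) (f : ratfun) : Qz := inres l m f.1 / inres l m f.2.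

Definition tame (l m : cochar) (f g : ratfun) : Qz :=
  (-1) ^ (vF l f * vF l g) * resF l m g ^ (vF l f) * resF l m f ^ (- vF l g).

(* an element of K_2(Q(T)) is a product of Steinberg symbols {f_i, g_i} *)
Definition K2rep := seq (ratfun * ratfun).
Definition K2rep_ok (k : K2rep) : bool :=
  all (fun s => rf_nonzero s.1 && rf_nonzero s.2) k.
Definition residue (l m : cochar) (k : K2rep) : Qz :=
  \prod_(s <- k) tame l m s.1 s.2.

(* The circle of rays S^1 = (R^2 \ 0)/R_+, modelled as the unit circle in R^2 *)
Definition on_circle (x : R * R) : Prop := x.1 ^+ 2 + x.2 ^+ 2 = 1.
Definition ray (l : cochar) : R * R :=
  let r := Num.sqrt ((l.1)%:~R ^+ 2 + (l.2)%:~R ^+ 2 : R) in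
  ((l.1)%:~R / r, (l.2)%:~R / r).
Definition in_rays (Sig : seq cochar) (x : R * R) : Prop :=
  exists s, s \in Sig /\ ray s = x.
Definition locally_const_off (Sig : seq cochar) (n : R * R -> int) : Prop :=
  forall x, on_circle x -> ~ in_rays Sig x ->
  exists e : R, 0 < e /\
    forall y, on_circle y -> ~ in_rays Sig y ->
      (x.1 - y.1) ^+ 2 + (x.2 - y.2) ^+ 2 < e -> n y = n x.

From HB Require Import structures.
From mathcomp Require Import all_boot all_order all_algebra.
From mathcomp Require Import fraction.
From mathcomp Require Import Rstruct.
From Stdlib Require Import Rdefinitions.
From mathcomp Require Import ring lra.
From Stdlib Require Import FunctionalExtensionality.
Import Order.TTheory GRing.Theory Num.Theory.
Local Open Scope ring_scope.
Set Implicit Arguments. Unset Strict Implicit.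

(* Let D be the finite set of differences c - c' of characters
   occurring in the Laurent polynomials of a representative of kappa.  If the
   pairings <lambda, c> are pairwise distinct on each support (which holds when
   <lambda, d> <> 0 for all nonzero d in D), the order of a Laurent polynomial
   along D_lambda is -<lambda, c> for the unique c of its support maximizing
   <lambda, .>, and its initial form is a monomial a z^<mu, c>.  Hence each
   rational function has v(f) = -<lambda, A> and leading form a z^<mu, A> for a
   vector A, and the tame symbol {f, g} is a constant times z^(det A B), using
   wedge mu lambda = 1.  The maximizing characters only depend on the signs of
   <lambda, d>, d in D, so the exponent n is defined on all of S^1 from the signs
   of x.d; these are locally constant off the finite set Sigma of unit vectors
   orthogonal to some nonzero d in D, and agree with the signs of <lambda, d> at
   x = ray lambda. *)

Definition frac_const : rat -> Qz := @tofrac _ \o polyC.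

Definition chi_sub (c c' : charac) : charac := (c.1 - c'.1, c.2 - c'.2).

Lemma pairing_sub l c c' : pairing l (chi_sub c c') = pairing l c - pairing l c'.
Proof. rewrite /pairing /=; ring. Qed.

Lemma chi_sub_eq0 c c' : (chi_sub c c' == (0, 0)) = (c == c').
Proof. by case: c c' => [a b] [a' b']; rewrite /chi_sub !xpair_eqE !subr_eq0. Qed.

(* Making it
   depend on [pos] only is what lets the exponent be defined on all of S^1. *)
Definition lead_char (pos : charac -> bool) (S : seq charac) : charac :=
  if S is c :: s then foldr (fun c' b => if pos (chi_sub c' b) then c' else b) c s
  else (0, 0).

Section LeadingCharacter.
Variables (l : cochar) (pos : charac -> bool) (S : seq charac).
Hypothesis pos_sign :
  {in S &, forall c c', pos (chi_sub c c') = (0 < pairing l (chi_sub c c'))}.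

Lemma lead_char_fold c s : {subset c :: s <= S} ->
  let b := foldr (fun c' b => if pos (chi_sub c' b) then c' else b) c s in
  b \in c :: s /\ forall c'', c'' \in c :: s -> pairing l c'' <= pairing l b.
Proof.
elim: s => [|c' s IH] sub /=.
  by split=> [|c'']; rewrite ?mem_head // inE => /eqP ->.
have sub' : {subset c :: s <= S}.
  by move=> x hx; apply: sub; move: hx; rewrite !inE => /orP [->|->]; rewrite ?orbT.
have [bin bmax] := IH sub'.
set b := foldr _ c s in bin bmax *.
have c'S : c' \in S by apply: sub; rewrite !inE eqxx orbT.
rewrite pos_sign // ?(sub' _ bin) // pairing_sub subr_gt0.
have in_cs x : x \in c :: s -> x \in [:: c, c' & s].
  by rewrite !inE => /orP [->|->]; rewrite ?orbT.
have from_cs x : x \in [:: c, c' & s] -> x = c' \/ x \in c :: s.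
  by rewrite !inE => /orP [->|/orP [/eqP ->|->]]; rewrite ?orbT; by [right|left].
case: ltP => H; split.
- by rewrite !inE eqxx orbT.
- move=> x /from_cs [->//|/bmax xb]; exact: ltW (le_lt_trans xb H).
- exact: in_cs.
- by move=> x /from_cs [->//|/bmax].
Qed.

Lemma lead_char_spec : S != [::] ->
  lead_char pos S \in S /\ forall c, c \in S -> pairing l c <= pairing l (lead_char pos S).
Proof. by rewrite /lead_char; case E: S => [//|c s] _; apply: lead_char_fold; rewrite -E. Qed.
End LeadingCharacter.

Lemma foldr_min_spec (T : eqType) (F : T -> int) c s :
  let v := foldr (fun c' m => Num.min (F c') m) (F c) s in
  (forall x, x \in c :: s -> v <= F x) /\ exists2 x, x \in c :: s & v = F x.
Proof.
elim: s => [|c' s [vmin [x hx vx]]] /=.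
  by split; [move=> x; rewrite inE => /eqP -> | exists c; rewrite ?mem_head].
split.
  move=> y; rewrite !inE ge_min => /orP [/eqP ->|/orP [/eqP ->|hy]]; rewrite ?lexx //.
  - by rewrite vmin ?mem_head ?orbT.
  - by rewrite vmin ?inE ?hy ?orbT.
set v := foldr _ _ s in vmin vx *.
case: (leP (F c') v) => _.
  by exists c'; rewrite ?inE ?eqxx ?orbT.
exists x; first by move: hx; rewrite !inE => /orP [->|->]; rewrite ?orbT.
by rewrite -vx.
Qed.

Lemma support_uniq p : uniq (lp_support p).
Proof. by rewrite /lp_support filter_uniq // undup_uniq. Qed.

Lemma support_coef p c : c \in lp_support p -> lp_coef p c != 0.
Proof. by rewrite /lp_support mem_filter => /andP []. Qed.

Definition adapted (l : cochar) (pos : charac -> bool) (p : lpoly) : Prop :=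
  let S := lp_support p in
  [/\ {in S &, forall c c', pos (chi_sub c c') = (0 < pairing l (chi_sub c c'))},
      {in S &, forall c c', c != c' -> pairing l c != pairing l c'}
    & S != [::]].

Section LeadingTerm.
Variables (l m : cochar) (pos : charac -> bool) (p : lpoly).
Hypothesis p_adapted : adapted l pos p.
Let c0 := lead_char pos (lp_support p).

Lemma ordv_lead : ordv l p = - pairing l c0.
Proof.
have [pos_sign _ ne] := p_adapted.
have [c0S c0max] := lead_char_spec pos_sign ne.
rewrite /ordv; move: ne c0S c0max; rewrite -/c0; case: (lp_support p) => [//|c s] _ c0S c0max.
have [vmin [x xS vx]] := foldr_min_spec (fun c' => - pairing l c') c s.
apply/eqP; rewrite eq_le vmin //= vx lerN2; exact: c0max.
Qed.

Lemma inres_lead : inres l m p = frac_const (lp_coef p c0) * zF ^ (pairing m c0).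
Proof.
have [pos_sign sep ne] := p_adapted.
have [c0S c0max] := lead_char_spec pos_sign ne.
rewrite /inres big_mkcond (bigD1_seq c0) //=; last exact: support_uniq.
rewrite ordv_lead eqxx big1_seq ?addr0 // => c /andP [cc0 cS].
case: eqP => // /eqP; rewrite eqr_opp => /eqP E.
by move: (sep _ _ cS c0S cc0); rewrite E eqxx.
Qed.
End LeadingTerm.

Lemma zF_neq0 : zF != 0.
Proof. by rewrite /zF tofrac_eq0 polyX_eq0. Qed.

Lemma frac_constX (c : rat) (n : int) : frac_const c ^ n = frac_const (c ^ n).
Proof. by rewrite -(fmorphXz frac_const). Qed.

Lemma frac_constM (c d : rat) : frac_const c * frac_const d = frac_const (c * d).
Proof. by rewrite -(rmorphM frac_const). Qed.

Lemma frac_constV (c : rat) : (frac_const c)^-1 = frac_const (c^-1).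
Proof. by rewrite -(fmorphV frac_const). Qed.

Definition lead_exp (pos : charac -> bool) (f : ratfun) : charac :=
  chi_sub (lead_char pos (lp_support f.1)) (lead_char pos (lp_support f.2)).
Definition lead_coef_rf (pos : charac -> bool) (f : ratfun) : rat :=
  lp_coef f.1 (lead_char pos (lp_support f.1)) / lp_coef f.2 (lead_char pos (lp_support f.2)).

Section LeadingForm.
Variables (l m : cochar) (pos : charac -> bool) (f : ratfun).
Hypotheses (num_adapted : adapted l pos f.1) (den_adapted : adapted l pos f.2).

Lemma vF_lead : vF l f = - pairing l (lead_exp pos f).
Proof.
rewrite /vF (ordv_lead num_adapted) (ordv_lead den_adapted) pairing_sub; ring.
Qed.

Lemma resF_lead : resF l m f = frac_const (lead_coef_rf pos f) * zF ^ pairing m (lead_exp pos f).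
Proof.
rewrite /resF (inres_lead m num_adapted) (inres_lead m den_adapted).
rewrite /lead_exp /lead_coef_rf pairing_sub [in RHS](expfzDr _ _ zF_neq0) -invr_expz.
by rewrite invfM frac_constV -frac_constM; ring.
Qed.

Lemma lead_coef_rf_neq0 : lead_coef_rf pos f != 0.
Proof.
have [sign1 _ ne1] := num_adapted; have [sign2 _ ne2] := den_adapted.
have [c1S _] := lead_char_spec sign1 ne1; have [c2S _] := lead_char_spec sign2 ne2.
by rewrite /lead_coef_rf mulf_neq0 // ?invr_eq0 support_coef.
Qed.
End LeadingForm.

Definition det (A B : charac) : int := A.1 * B.2 - A.2 * B.1.

(* Since wedge m l = 1, (m, l) is a basis dual to the coordinates, which turns
   the z-exponent of the tame symbol into a determinant. *)
Lemma tame_exponent (l m A B : charac) : wedge m l = 1 ->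
  pairing m B * (- pairing l A) + pairing m A * (- - pairing l B) = det A B.
Proof. by move=> Hw; rewrite /det -[RHS]mul1r -Hw /wedge /pairing; ring. Qed.

Lemma tame_monomial l m f g cf cg A B :
  wedge m l = 1 -> cf != 0 -> cg != 0 ->
  resF l m f = frac_const cf * zF ^ pairing m A -> vF l f = - pairing l A ->
  resF l m g = frac_const cg * zF ^ pairing m B -> vF l g = - pairing l B ->
  exists2 c, c != 0 & tame l m f g = frac_const c * zF ^ det A B.
Proof.
move=> Hw cf0 cg0 Rf Vf Rg Vg.
rewrite /tame Rf Rg Vf Vg.
exists ((-1) ^ ((- pairing l A) * (- pairing l B)) * cg ^ (- pairing l A) * cf ^ (- - pairing l B)).
  by rewrite !mulf_neq0 // expfz_neq0 // ?oppr_eq0 ?oner_eq0.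
rewrite !expfzMl !exprz_exp -(rmorphN1 frac_const) !frac_constX.
rewrite -(tame_exponent A B Hw) (expfzDr _ _ zF_neq0) -!frac_constM.
ring.
Qed.

Fixpoint all_polys (P : lpoly -> Prop) (k : K2rep) : Prop :=
  if k is s :: k' then [/\ P s.1.1, P s.1.2, P s.2.1, P s.2.2 & all_polys P k']
  else True.

Definition exponent_of (pos : charac -> bool) (k : K2rep) : int :=
  \sum_(s <- k) det (lead_exp pos s.1) (lead_exp pos s.2).

Lemma residue_monomial l m pos k : wedge m l = 1 -> all_polys (adapted l pos) k ->
  exists2 c, c != 0 & residue l m k = frac_const c * zF ^ exponent_of pos k.
Proof.
move=> Hw; elim: k => [|s k IH] /=.
  move=> _; exists 1; rewrite ?oner_eq0 // /residue /exponent_of !big_nil expr0z mulr1.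
  exact/esym/(rmorph1 frac_const).
move=> [a1 a2 a3 a4 /IH [c c0 Hc]].
have [d d0 Hd] := tame_monomial Hw (lead_coef_rf_neq0 a1 a2) (lead_coef_rf_neq0 a3 a4)
  (resF_lead m a1 a2) (vF_lead a1 a2) (resF_lead m a3 a4) (vF_lead a3 a4).
exists (d * c); first by rewrite mulf_neq0.
rewrite /residue /exponent_of !big_cons -/(residue l m k) -/(exponent_of pos k) Hc Hd.
by rewrite [in RHS](expfzDr _ _ zF_neq0) -frac_constM; ring.
Qed.

Definition dotR (x : R * R) (d : charac) := x.1 * d.1%:~R + x.2 * d.2%:~R.

Lemma dotR0 x : dotR x (0, 0) = 0.
Proof. by rewrite /dotR /= !mulr0z !mulr0 addr0. Qed.

Lemma sum_sq_gt0 (d1 d2 : int) : (d1, d2) != (0, 0) ->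
  0 < (d1%:~R : R) ^+ 2 + (d2%:~R : R) ^+ 2.
Proof.
move=> d0; rewrite lt_def addr_ge0 ?sqr_ge0 // andbT paddr_eq0 ?sqr_ge0 //.
by rewrite !sqrf_eq0 !intr_eq0; apply: contra d0 => /andP [/eqP -> /eqP ->].
Qed.

Lemma normalize (a b u v : R) : 0 < a ^+ 2 + b ^+ 2 ->
  let r := Num.sqrt (a ^+ 2 + b ^+ 2) in
  [/\ 0 < r, (a / r) ^+ 2 + (b / r) ^+ 2 = 1 & a / r * u + b / r * v = (a * u + b * v) / r].
Proof.
move=> ab r; have r0 : 0 < r by rewrite sqrtr_gt0.
have r2 : r ^+ 2 = a ^+ 2 + b ^+ 2 by rewrite sqr_sqrtr // ltW.
split => //; last by rewrite mulrDl [a / r * u]mulrAC [b / r * v]mulrAC.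
by rewrite !expr_div_n -mulrDl -r2 divff // expf_neq0 // gt_eqF.
Qed.

Lemma ray_on_circle (l : cochar) : l != (0, 0) -> on_circle (ray l).
Proof. by case: l => l1 l2 /sum_sq_gt0 /(normalize 0 0) []. Qed.

Lemma dotR_ray (l : cochar) (d : charac) : l != (0, 0) ->
  exists2 r : R, 0 < r & dotR (ray l) d = (pairing l d)%:~R / r.
Proof.
case: l => l1 l2 /sum_sq_gt0 /(normalize d.1%:~R d.2%:~R) [r0 _ Hr].
by exists (Num.sqrt ((l1%:~R : R) ^+ 2 + l2%:~R ^+ 2)); rewrite // /pairing /= intrD !intrM.
Qed.

Lemma unit_perp (x1 x2 a b : R) : x1 ^+ 2 + x2 ^+ 2 = 1 -> 0 < a ^+ 2 + b ^+ 2 ->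
  x1 * a + x2 * b = 0 -> let r := Num.sqrt (b ^+ 2 + a ^+ 2) in
  (x1, x2) = (- b / r, a / r) \/ (x1, x2) = (b / r, - a / r).
Proof.
move=> circ ab perp r; rewrite addrC in ab.
have r0 : 0 < r by rewrite sqrtr_gt0.
have r2 : r ^+ 2 = a ^+ 2 + b ^+ 2 by rewrite sqr_sqrtr ?ltW // addrC.
have rn0 : r != 0 by rewrite gt_eqF.
(* s is the coordinate of x along (-b, a); it is +-r since x is a unit vector. *)
set s := x2 * a - x1 * b.
have s2 : s ^+ 2 = r ^+ 2.
  have : s ^+ 2 + (x1 * a + x2 * b) ^+ 2 = (x1 ^+ 2 + x2 ^+ 2) * (a ^+ 2 + b ^+ 2).
    by rewrite /s; ring.
  by rewrite perp circ expr0n /= addr0 mul1r r2.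
have x1E : x1 = - b * s / r ^+ 2.
  apply: (canRL (mulfK _)); rewrite ?expf_neq0 // r2.
  by apply/eqP; rewrite -subr_eq0 /s; apply/eqP; rewrite -[RHS](mulr0 a) -perp; ring.
have x2E : x2 = a * s / r ^+ 2.
  apply: (canRL (mulfK _)); rewrite ?expf_neq0 // r2.
  by apply/eqP; rewrite -subr_eq0 /s; apply/eqP; rewrite -[RHS](mulr0 b) -perp; ring.
have /eqP : (s - r) * (s + r) = 0 by rewrite -subr_sqr s2 subrr.
rewrite mulf_eq0 subr_eq0 addr_eq0 => /orP [] /eqP sE; [left|right];
  by rewrite x1E x2E sE; congr pair; field.
Qed.

(* The rotation of a character by a quarter turn, and the opposite cocharacter;
   ray (rot d) and ray (opp_co (rot d)) are the unit vectors orthogonal to d. *)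
Definition rot (d : charac) : cochar := (- d.2, d.1).
Definition opp_co (l : cochar) : cochar := (- l.1, - l.2).

Lemma perp_ray (x : R * R) (d : charac) : on_circle x -> d != (0, 0) -> dotR x d = 0 ->
  x = ray (rot d) \/ x = ray (opp_co (rot d)).
Proof.
case: x d => x1 x2 [d1 d2] circ /sum_sq_gt0 d0 perp.
rewrite /ray /rot /opp_co /= !intrN !sqrrN opprK.
exact: unit_perp.
Qed.

Lemma sign_perturb (v w : R) : w ^+ 2 < v ^+ 2 -> (0 < v + w) = (0 < v).
Proof. by move=> wv; apply/idP/idP => h; nra. Qed.

(* 1 + |d|^2, which bounds the variation of the form d by Cauchy-Schwarz. *)
Definition weight (d : charac) := 1 + (d.1%:~R : R) ^+ 2 + (d.2%:~R : R) ^+ 2.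

Lemma weight_gt0 d : 0 < weight d.
Proof. by rewrite /weight -addrA ltr_pwDl // addr_ge0 ?sqr_ge0. Qed.

Lemma dotR_sq_le (t : R * R) d : dotR t d ^+ 2 <= (t.1 ^+ 2 + t.2 ^+ 2) * weight d.
Proof.
rewrite /dotR /weight; set a := (d.1%:~R : R); set b := (d.2%:~R : R).
have := sqr_ge0 (t.1 * b - t.2 * a); have := sqr_ge0 t.1; have := sqr_ge0 t.2.
nra.
Qed.

(* Within squared distance [sign_radius x d] of x, the form d keeps its sign. *)
Definition sign_radius (x : R * R) (d : charac) := dotR x d ^+ 2 / weight d.

Lemma sign_radius_min (x : R * R) (D : seq charac) :
  exists e : R, 0 < e /\ forall d, d \in D -> dotR x d != 0 -> e <= sign_radius x d.
Proof.
elim: D => [|d D [e [e0 He]]]; first by exists 1.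
have [xd0|xd0] := eqVneq (dotR x d) 0.
  by exists e; split => // d'; rewrite inE => /orP [/eqP ->|/He //]; rewrite xd0 eqxx.
exists (Num.min (sign_radius x d) e); split.
  by rewrite lt_min e0 divr_gt0 ?weight_gt0 // exprn_even_gt0.
move=> d'; rewrite inE ge_min => /orP [/eqP ->|/He dd' /dd' ->]; rewrite ?lexx ?orbT //.
Qed.

Lemma local_signs (x : R * R) (D : seq charac) :
  (forall d, d \in D -> d != (0, 0) -> dotR x d != 0) ->
  exists e : R, 0 < e /\ forall y : R * R, (x.1 - y.1) ^+ 2 + (x.2 - y.2) ^+ 2 < e ->
    forall d, d \in D -> (0 < dotR y d) = (0 < dotR x d).
Proof.
move=> x_off; have [e [e0 He]] := sign_radius_min x D.
exists e; split => // y xy d dD.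
have [->|d0] := eqVneq d (0, 0); first by rewrite !dotR0.
have := He d dD (x_off d dD d0).
rewrite /sign_radius ler_pdivlMr ?weight_gt0 // => ed.
have yE : dotR y d = dotR x d + dotR (y.1 - x.1, y.2 - x.2) d by rewrite /dotR /=; ring.
rewrite yE sign_perturb //; apply: le_lt_trans (dotR_sq_le _ d) _; apply: lt_le_trans ed.
by rewrite ltr_pM2r ?weight_gt0 //= -(sqrrN (y.1 - x.1)) -(sqrrN (y.2 - x.2)) !opprB.
Qed.

Fixpoint chars_of (k : K2rep) : seq charac :=
  if k is s :: k' then
    lp_support s.1.1 ++ lp_support s.1.2 ++ lp_support s.2.1 ++ lp_support s.2.2 ++ chars_of k'
  else [::].

Definition diffs_of (k : K2rep) : seq charac :=
  [seq chi_sub c c' | c <- chars_of k, c' <- chars_of k].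

Definition walls_of (k : K2rep) : seq cochar :=
  flatten [seq [:: rot d; opp_co (rot d)] | d <- diffs_of k & d != (0, 0)].

Definition sign_at (k : K2rep) (x : R * R) (d : charac) : bool :=
  (d \in diffs_of k) && (0 < dotR x d).
Definition sign_of (k : K2rep) (l : cochar) (d : charac) : bool :=
  (d \in diffs_of k) && (0 < pairing l d).

Lemma all_polys_chars (P : lpoly -> Prop) k : K2rep_ok k ->
  (forall p, lp_support p != [::] -> {subset lp_support p <= chars_of k} -> P p) ->
  all_polys P k.
Proof.
elim: k => [//|s k IH] /= /andP [/andP [/andP [n1 n2] /andP [n3 n4]] ok] HP.
have sub q : {subset lp_support q <= chars_of k} -> {subset lp_support q <= chars_of (s :: k)}.
  by move=> qk c /qk ck; rewrite /= !mem_cat ck !orbT.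
by split; [apply: HP => // c cS; rewrite !mem_cat cS ?orbT ..|
           apply: IH => // q nq /sub; exact: HP].
Qed.

Lemma walls_nonzero k s : s \in walls_of k -> s != (0, 0).
Proof.
case/flattenP => t /mapP [[d1 d2]]; rewrite mem_filter => /andP [d0 _] ->.
rewrite !inE /rot /opp_co /= => /orP [] /eqP ->; apply: contra d0;
  by rewrite !xpair_eqE ?oppr_eq0 => /andP [-> ->].
Qed.

Lemma dotR_off_walls k x : on_circle x -> ~ in_rays (walls_of k) x ->
  forall d, d \in diffs_of k -> d != (0, 0) -> dotR x d != 0.
Proof.
move=> circ x_off d dD d0; apply/eqP => /(perp_ray circ d0) x_wall; apply: x_off.
have dwall : [:: rot d; opp_co (rot d)] \in [seq [:: rot d; opp_co (rot d)] | d <- diffs_of k & d != (0, 0)].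
  by apply: (map_f (fun d => [:: rot d; opp_co (rot d)])); rewrite mem_filter d0 dD.
by case: x_wall => ->; [exists (rot d) | exists (opp_co (rot d))];
  split => //; apply/flattenP; exists [:: rot d; opp_co (rot d)]; rewrite ?inE ?eqxx ?orbT.
Qed.

Lemma exponent_locally_const k :
  locally_const_off (walls_of k) (fun x => exponent_of (sign_at k x) k).
Proof.
move=> x circ x_off; have [e [e0 He]] := local_signs (dotR_off_walls circ x_off).
exists e; split => // y _ _ xy; congr exponent_of.
apply: functional_extensionality => d; rewrite /sign_at.
by case dD: (d \in diffs_of k); rewrite //= He.
Qed.

Lemma sign_at_ray k l : l != (0, 0) -> sign_at k (ray l) = sign_of k l.
Proof.
move=> l0; apply: functional_extensionality => d; rewrite /sign_at /sign_of.
have [r r0 ->] := dotR_ray d l0.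
by rewrite pmulr_lgt0 ?invr_gt0 // ltr0z.
Qed.

Lemma adapted_off_walls k l : K2rep_ok k -> l != (0, 0) -> ~ in_rays (walls_of k) (ray l) ->
  all_polys (adapted l (sign_of k l)) k.
Proof.
move=> ok l0 l_off; apply: all_polys_chars => // p ne sub.
have diff c c' : c \in lp_support p -> c' \in lp_support p -> chi_sub c c' \in diffs_of k.
  by move=> cS c'S; apply: allpairs_f; apply: sub.
split => // [c c' cS c'S|c c' cS c'S cc']; first by rewrite /sign_of diff.
have := dotR_off_walls (ray_on_circle l0) l_off (diff _ _ cS c'S).
rewrite chi_sub_eq0 cc' => /(_ isT); apply: contra => /eqP lc.
have [r r0 ->] := dotR_ray (chi_sub c c') l0.
by rewrite pairing_sub lc subrr mul0r.
Qed.

Unset Implicit Arguments.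

Theorem mainTheorem13 (kappa : K2rep) (Hk : K2rep_ok kappa) :
  exists Sig : seq cochar,
    (forall s, s \in Sig -> s != (0, 0)) /\
    exists n : R * R -> int,
      locally_const_off Sig n /\
      forall l : cochar, primitive l -> ~ in_rays Sig (ray l) ->
      forall m : cochar, wedge m l = 1 ->
      exists c : rat, c != 0 /\
        residue l m kappa = tofrac (c%:P) * zF ^ (n (ray l)).
Proof.
exists (walls_of kappa); split; first exact: walls_nonzero.
exists (fun x => exponent_of (sign_at kappa x) kappa); split.
  exact: exponent_locally_const.
move=> l l_prim l_off m Hw.
have l0 : l != (0, 0) by apply: contraTneq l_prim => ->.
rewrite sign_at_ray //.
have [c c0 ->] := residue_monomial Hw (adapted_off_walls Hk l0 l_off).
by exists c.
Qed.
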